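(* Let $\theta$ be an infinite cardinal, let $\mathbb{P}$ be a $\theta$-directed poset, and let $\mathbb{P}^\ast$ be a $(<\theta)$-cofinal subposet of $\mathbb{P}$. Let $(I,\le)$ be a partial order and let $\langle p_i : i \in I\rangle$ be a diagram in $\mathbb{P}$ (i.e. $i \le j$ in $I$ implies $p_i \le p_j$). If for all $i \in I$, $|\{j \in I \mid j < i\}| < \theta$, then there exist a cofinal subset $I_0 \subseteq I$ and a diagram $\langle q_i : i \in I_0\rangle$ in $\mathbb{P}^\ast$ (i.e. $i\le j$ in $I_0$ implies $q_i \le^\ast q_j$) such that $p_i \le q_i$ for all $i \in I_0$.
   Context: A poset $\mathbb{P}$ is $\theta$-directed if every subset of cardinality $<\theta$ has an upper bound. A subposet of a poset $(\mathbb{P},\le)$ is a poset $(\mathbb{P}^\ast,\le^\ast)$ with $\mathbb{P}^\ast \subseteq \mathbb{P}$ and $x \le^\ast y$ implying $x \le y$. For a cardinal $\kappa$, $\mathbb{P}^\ast$ is $\kappa$-cofinal in $\mathbb{P}$ if for every $p \in \mathbb{P}$ and every sequence $\langle p_i : i < \kappa\rangle$ of elements of $\mathbb{P}^\ast$ with $p_i \le p$ for all $i$, there is $q \in \mathbb{P}^\ast$ with $p \le q$ and $p_i \le^\ast q$ for all $i<\kappa$. $\mathbb{P}^\ast$ is $(<\theta)$-cofinal if it is $\kappa$-cofinal for every cardinal $\kappa < \theta$. *)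

Set Implicit Arguments.

Definition card_le (A B : Type) : Prop :=
  exists f : A -> B, forall x y, f x = f y -> x = y.
Definition card_lt (A B : Type) : Prop := card_le A B /\ ~ card_le B A.

(* The cardinal theta is represented by a type Theta of that cardinality. *)
Definition infinite_type (Theta : Type) : Prop := card_le nat Theta.

Definition is_poset_on (T : Type) (S : T -> Prop) (R : T -> T -> Prop) : Prop :=
  (forall x, S x -> R x x) /\
  (forall x y, S x -> S y -> R x y -> R y x -> x = y) /\
  (forall x y z, S x -> S y -> S z -> R x y -> R y z -> R x z).

Definition is_poset (T : Type) (R : T -> T -> Prop) : Prop :=
  is_poset_on (fun _ => True) R.

Definition directed (Theta : Type) (P : Type) (le : P -> P -> Prop) : Prop :=
  forall A : P -> Prop, card_lt {x : P | A x} Theta ->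
    exists u : P, forall x, A x -> le x u.

Definition subposet (P : Type) (le : P -> P -> Prop)
  (Pstar : P -> Prop) (lestar : P -> P -> Prop) : Prop :=
  is_poset_on Pstar lestar /\
  (forall x y, Pstar x -> Pstar y -> lestar x y -> le x y).

(* kappa-cofinal, the cardinal kappa being represented by an index type K. *)
Definition kappa_cofinal (K : Type) (P : Type) (le : P -> P -> Prop)
  (Pstar : P -> Prop) (lestar : P -> P -> Prop) : Prop :=
  forall (p : P) (ps : K -> P),
    (forall i, Pstar (ps i)) -> (forall i, le (ps i) p) ->
    exists q : P, Pstar q /\ le p q /\ forall i, lestar (ps i) q.

Definition lt_cofinal (Theta : Type) (P : Type) (le : P -> P -> Prop)
  (Pstar : P -> Prop) (lestar : P -> P -> Prop) : Prop :=
  forall K : Type, card_lt K Theta -> kappa_cofinal K le Pstar lestar.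

From mathcomp Require Import ssreflect ssrfun ssrbool ssrnat.
From mathcomp Require Import boolp classical_sets.

(* Apply Zorn's lemma to the partial diagrams in P*, i.e. partial maps
   i |-> q_i from I to P* with p_i <= q_i that are monotone into (P*, <=* ),
   ordered by inclusion of graphs.  The domain of a maximal one is cofinal:
   otherwise pick i with nothing of the domain above it.  The domain
   elements below i are strict predecessors of i, hence fewer than theta;
   theta-directedness bounds their values together with p_i, and
   (<theta)-cofinality raises this bound to some q in P* lying <=*-above
   those values.  Adding (i, q) gives a larger partial diagram: the only
   new comparabilities are from below i, since none is above it. *)

Set Implicit Arguments.
Unset Strict Implicit.

Local Open Scope classical_set_scope.

Lemma card_le_trans (A B C : Type) : card_le A B -> card_le B C -> card_le A C.
Proof. by move=> [f injf] [g injg]; exists (g \o f) => x y /injg /injf. Qed.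

Lemma card_le_lt_trans (A B C : Type) :
  card_le A B -> card_lt B C -> card_lt A C.
Proof.
move=> leAB [leBC nleCB]; split; first exact: card_le_trans leAB leBC.
by move=> leCA; apply: nleCB; exact: card_le_trans leCA leAB.
Qed.

Lemma card_le_range (K T : Type) (f : K -> T) :
  card_le {x | exists k, x = f k} K.
Proof.
exists (fun x : {x | exists k, x = f k} => sval (cid (proj2_sig x))).
move=> -[x xf] [y yf] /= kl; apply: eq_exist.
by rewrite (svalP (cid xf)) (svalP (cid yf)) kl.
Qed.

Lemma card_le_pair (T : Type) (a b : T) : card_le {x | x = a \/ x = b} bool.
Proof.
exists (fun x => `[< sval x = a >]) => -[x xab] [y yab] /= fxy.
apply: eq_exist; move: fxy.
case: (asboolP (x = a)) => [->|xa]; case: (asboolP (y = a)) => [->|ya] //= _.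
by case: xab => [// | ->]; case: yab => [// | ->].
Qed.

Lemma not_card_le_nat_bool : ~ card_le nat bool.
Proof.
move=> [f injf].
have : [\/ f 0 = f 1, f 0 = f 2 | f 1 = f 2].
  by case: (f 0); case: (f 1); case: (f 2); constructor.
by case=> /injf.
Qed.

Lemma card_lt_bool (Theta : Type) : infinite_type Theta -> card_lt bool Theta.
Proof.
move=> infTheta; split.
  apply: card_le_trans infTheta.
  by exists nat_of_bool => -[] [].
by move=> leThetabool; apply/not_card_le_nat_bool/(card_le_trans infTheta).
Qed.

Lemma card_lt_pair (Theta T : Type) (a b : T) :
  infinite_type Theta -> card_lt {x | x = a \/ x = b} Theta.
Proof. by move/card_lt_bool; apply: card_le_lt_trans; exact: card_le_pair. Qed.

Lemma card_le_graph (T U : Type) (G : set (T * U)) (S : set T) :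
  (forall t a b, G (t, a) -> G (t, b) -> a = b) ->
  card_le {x | G x /\ S x.1} {t | S t}.
Proof.
move=> Gfun; exists (fun x => exist S (sval x).1 (proj2 (svalP x))).
move=> -[[t a] [Gta St]] [[t' b] [Gtb St']] /= [tt'].
move: St' Gtb; rewrite -tt' => St' Gtb.
by apply: eq_exist; rewrite (Gfun _ _ _ Gta Gtb).
Qed.

Section DirectedBounds.

Variables (Theta P : Type) (le : P -> P -> Prop).
Variables (Pstar : P -> Prop) (lestar : P -> P -> Prop).
Hypothesis infTheta : infinite_type Theta.
Hypothesis le_trans : forall x y z, le x y -> le y z -> le x z.
Hypothesis dirP : directed Theta le.
Hypothesis cofP : lt_cofinal Theta le Pstar lestar.

Lemma directed_family_ub (K : Type) (f : K -> P) :
  card_lt K Theta -> exists u, forall k, le (f k) u.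
Proof.
move=> ltK; have [u ub] := dirP (card_le_lt_trans (card_le_range f) ltK).
by exists u => k; apply: ub; exists k.
Qed.

(* Bounding the family and x in a single step would need |K| + 1 < theta. *)
Lemma directed_family_ub_above (K : Type) (f : K -> P) (x : P) :
  card_lt K Theta -> exists u, le x u /\ forall k, le (f k) u.
Proof.
move=> /(directed_family_ub f) [u ub].
have [v uxv] := dirP (card_lt_pair u x infTheta).
exists v; split; first by apply: uxv; right.
by move=> k; apply: le_trans (ub k) _; apply: uxv; left.
Qed.

Lemma lt_cofinal_ub (K : Type) (ps : K -> P) (x : P) :
  card_lt K Theta -> (forall k, Pstar (ps k)) ->
  exists q, [/\ Pstar q, le x q & forall k, lestar (ps k) q].
Proof.
move=> ltK psS; have [u [xu psu]] := directed_family_ub_above ps x ltK.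
have [q [qS [uq psq]]] := cofP ltK psS psu.
by exists q; split=> //; exact: le_trans xu uq.
Qed.

End DirectedBounds.

Section PartialDiagrams.

Variables (Theta P : Type) (le : P -> P -> Prop).
Variables (Pstar : P -> Prop) (lestar : P -> P -> Prop).
Variables (I : Type) (leI : I -> I -> Prop) (p : I -> P).

Record partial_diagram (G : set (I * P)) : Prop := PartialDiagram {
  pd_functional : forall i a b, G (i, a) -> G (i, b) -> a = b;
  pd_in_star : forall i a, G (i, a) -> Pstar a;
  pd_ge : forall i a, G (i, a) -> le (p i) a;
  pd_monotone : forall i j a b, G (i, a) -> G (j, b) -> leI i j -> lestar a b
}.

Definition graph_dom (G : set (I * P)) : set I := [set i | exists a, G (i, a)].

Lemma partial_diagram_bigcup (F : set (set (I * P))) :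
  F `<=` partial_diagram -> total_on F subset ->
  partial_diagram (\bigcup_(G in F) G).
Proof.
move=> Fpd Ftot; split.
- move=> i a b [G FG Ga] [H FH Hb].
  case: (Ftot G H FG FH) => [GH|HG].
    exact: pd_functional (Fpd H FH) _ _ _ (GH _ Ga) Hb.
  exact: pd_functional (Fpd G FG) _ _ _ Ga (HG _ Hb).
- by move=> i a [G FG Ga]; exact: pd_in_star (Fpd G FG) _ _ Ga.
- by move=> i a [G FG Ga]; exact: pd_ge (Fpd G FG) _ _ Ga.
- move=> i j a b [G FG Ga] [H FH Hb].
  case: (Ftot G H FG FH) => [GH|HG].
    exact: pd_monotone (Fpd H FH) _ _ _ _ (GH _ Ga) Hb.
  exact: pd_monotone (Fpd G FG) _ _ _ _ Ga (HG _ Hb).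
Qed.

Hypothesis leI_refl : forall i, leI i i.
Hypothesis lestar_refl : forall x, Pstar x -> lestar x x.

Lemma partial_diagram_extend (G : set (I * P)) (i : I) (q : P) :
  partial_diagram G -> (forall j, leI i j -> ~ graph_dom G j) ->
  Pstar q -> le (p i) q -> (forall j a, G (j, a) -> leI j i -> lestar a q) ->
  partial_diagram (G `|` [set (i, q)]).
Proof.
move=> Gpd iG qS pq Gq; have nGi := iG i (leI_refl i).
split.
- move=> j a b [Ga|[-> ->]] [Gb|jbE].
  + exact: pd_functional Gpd _ _ _ Ga Gb.
  + by case: jbE => jE _; case: nGi; exists a; rewrite -jE.
  + by case: nGi; exists b.
  + by case: jbE.
- by move=> j a [Ga|[_ ->]] //; exact: pd_in_star Gpd _ _ Ga.
- by move=> j a [Ga|[-> ->]] //; exact: pd_ge Gpd _ _ Ga.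
- move=> j j' a b [Ga|[-> ->]] [Gb|[-> ->]] jj'.
  + exact: pd_monotone Gpd _ _ _ _ Ga Gb jj'.
  + exact: Gq Ga jj'.
  + by case: (iG j' jj'); exists b.
  + exact: lestar_refl.
Qed.

Hypothesis infTheta : infinite_type Theta.
Hypothesis le_trans : forall x y z, le x y -> le y z -> le x z.
Hypothesis dirP : directed Theta le.
Hypothesis cofP : lt_cofinal Theta le Pstar lestar.
Hypothesis smallI : forall i, card_lt {j : I | leI j i /\ j <> i} Theta.

Lemma maximal_partial_diagram_cofinal (A : set (I * P)) :
  partial_diagram A -> (forall B, A `<` B -> ~ partial_diagram B) ->
  forall i, exists j, graph_dom A j /\ leI i j.
Proof.
move=> Apd Amax i; apply: contrapT => noj.
have iA j : leI i j -> ~ graph_dom A j by move=> ij Aj; apply: noj; exists j.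
have nAi := iA i (leI_refl i).
pose K := {x : I * P | A x /\ (leI x.1 i /\ x.1 <> i)}.
have ltK : card_lt K Theta.
  exact: card_le_lt_trans (card_le_graph _ (pd_functional Apd)) (smallI i).
have KS : forall k : K, Pstar (sval k).2.
  by move=> [[j a] [Aja _]] /=; exact: pd_in_star Apd _ _ Aja.
have [q [qS pq Kq]] :=
  lt_cofinal_ub infTheta le_trans dirP cofP (p i) ltK KS.
apply: (Amax (A `|` [set (i, q)])).
  split; first by move=> x Ax; left.
  by move=> BA; apply: nAi; exists q; apply: BA; right.
apply: partial_diagram_extend => // j a Aja ji.
have ij : j <> i by move=> eji; apply: nAi; exists a; rewrite -eji.
exact: (Kq (exist _ (j, a) (conj Aja (conj ji ij)))).
Qed.

End PartialDiagrams.

Theorem theorem3p5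
  (Theta : Type) (HTheta : infinite_type Theta)
  (P : Type) (le : P -> P -> Prop) (HP : is_poset le)
  (Hdir : directed Theta le)
  (Pstar : P -> Prop) (lestar : P -> P -> Prop)
  (Hsub : subposet le Pstar lestar)
  (Hcof : lt_cofinal Theta le Pstar lestar)
  (I : Type) (leI : I -> I -> Prop) (HI : is_poset leI)
  (p : I -> P) (Hdiag : forall i j, leI i j -> le (p i) (p j))
  (Hsmall : forall i, card_lt {j : I | leI j i /\ j <> i} Theta) :
  exists (I0 : I -> Prop) (q : I -> P),
    (forall i, exists j, I0 j /\ leI i j) /\
    (forall i, I0 i -> Pstar (q i)) /\
    (forall i j, I0 i -> I0 j -> leI i j -> lestar (q i) (q j)) /\
    (forall i, I0 i -> le (p i) (q i)).
Proof.
have le_trans x y z : le x y -> le y z -> le x z.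
  by case: HP => _ [_ trans]; apply: trans.
have lestar_refl x : Pstar x -> lestar x x.
  by case: Hsub => -[refl _] _; apply: refl.
have leI_refl i : leI i i by case: HI => refl _; apply: refl.
have [A [Apd Amax]] :=
  Zorn_bigcup (@partial_diagram_bigcup P le Pstar lestar I leI p).
have /choice[q Aq] : forall i, exists a, graph_dom A i -> A (i, a).
  move=> i; case: (pselect (graph_dom A i)) => [[a Aia] | nAi].
    by exists a.
  by exists (p i).
exists (graph_dom A), q; split.
  exact: maximal_partial_diagram_cofinal leI_refl lestar_refl HTheta le_trans
    Hdir Hcof Hsmall _ Apd Amax.
split; first by move=> i /Aq; exact: pd_in_star Apd _ _.
split; first by move=> i j /Aq Ai /Aq Aj; exact: pd_monotone Apd _ _ _ _ Ai Aj.
by move=> i /Aq; exact: pd_ge Apd _ _.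
Qed.
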